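(* Let $n\geq 1$. Among all topological trees with exactly $n$ leaves, the star $K_{1,n}$ is the one with the smallest Matula number. Moreover, $M(K_{1,n})=2^n$ for all $n>1$.
   Context: Let $p_m$ denote the $m$-th prime number ($p_1=2,p_2=3,p_3=5,\ldots$). All trees are rooted. The branches of a rooted tree $T$ are the components (rooted at the children of the root) that remain after deleting the root of $T$ and its incident edges. The Matula number $M(T)$ of a rooted tree is defined recursively: $M(K_1)=1$ for the one-vertex tree, and if $T$ has branches $T_1,\ldots,T_r$ then $M(T)=p_{M(T_1)}\cdot p_{M(T_2)}\cdots p_{M(T_r)}$. A leaf is a vertex of outdegree $0$ (so the one-vertex tree has one leaf). A topological tree is a rooted tree with no vertex of outdegree $1$. The star $K_{1,n}$ is the rooted tree consisting of a root with $n$ leaves attached directly to it. *)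

From mathcomp Require Import all_boot.
Set Implicit Arguments. Unset Strict Implicit. Unset Printing Implicit Defensive.

(* Rooted (unordered) trees: a node with its finite list of branches.
   The order of the list is irrelevant for all notions below. *)
Inductive tree := Node of seq tree.

Definition K1 : tree := Node [::].

Lemma exists_prime_above (n : nat) : exists p, (n < p) && prime p.
Proof. by case: (prime_above n) => p H1 H2; exists p; rewrite H1 H2. Qed.

Definition nextprime (n : nat) : nat := ex_minn (exists_prime_above n).

(* p_m, the m-th prime, with p_1 = 2, p_2 = 3, ... (p_0 is irrelevant, set to 2) *)
Definition nth_prime (m : nat) : nat := iter m.-1 nextprime 2.

Fixpoint matula (t : tree) : nat :=
  let: Node ts := t in
  foldr (fun u acc => nth_prime (matula u) * acc) 1 ts.

Fixpoint leaves (t : tree) : nat :=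
  let: Node ts := t in
  if ts is [::] then 1 else foldr (fun u acc => leaves u + acc) 0 ts.

Fixpoint topological (t : tree) : bool :=
  let: Node ts := t in
  (size ts != 1) && foldr (fun u acc => topological u && acc) true ts.

Definition star (n : nat) : tree := Node (nseq n K1).

From mathcomp Require Import all_boot.
From Stdlib Require List.

(* Every branch T_i of a tree contributes the factor p_(M(T_i)) to M(T), and
   p_(M(T_i)) >= 2 ^ (leaves of T_i): for a leaf this is p_1 = 2, otherwise it
   follows inductively from 2 ^ (leaves of T_i) <= M(T_i) < p_(M(T_i)).
   Multiplying over the branches gives M(T) >= 2 ^ (leaves of T) for every tree
   that is not a single vertex, with equality for the star.  The bound holds for
   all rooted trees. *)

Fixpoint tree_ind_Forall (P : tree -> Prop)
    (IH : forall ts, List.Forall P ts -> P (Node ts)) (t : tree) : P t :=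
  let: Node ts := t in
  IH ts ((fix branches (us : seq tree) : List.Forall P us :=
            if us is u :: us' then
              List.Forall_cons u (tree_ind_Forall P IH u) (branches us')
            else List.Forall_nil P) ts).

Lemma nextprime_gt n : n < nextprime n.
Proof. by rewrite /nextprime; case: ex_minnP => m /andP []. Qed.

Lemma nth_prime_gt m : m < nth_prime m.
Proof.
case: m => // m; rewrite /nth_prime /=.
elim: m => //= m IHm.
exact: leq_ltn_trans IHm (nextprime_gt _).
Qed.

Lemma matula_Node ts : matula (Node ts) = \prod_(u <- ts) nth_prime (matula u).
Proof. by elim: ts => [|u us /= ->]; rewrite ?big_nil ?big_cons. Qed.

Lemma leaves_Node ts :
  ~~ nilp ts -> leaves (Node ts) = \sum_(u <- ts) leaves u.
Proof.
case: ts => // u us _ /=; rewrite big_cons; congr (_ + _).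
by elim: us => [|v vs /= ->]; rewrite ?big_nil ?big_cons.
Qed.

Lemma matula_gt0 t : 0 < matula t.
Proof.
case: t => ts; rewrite matula_Node prodn_gt0 // => u.
exact: leq_ltn_trans (nth_prime_gt _).
Qed.

Lemma expn_sum_leaves_le_prod ts :
  List.Forall (fun u => 2 ^ leaves u <= nth_prime (matula u)) ts ->
  2 ^ (\sum_(u <- ts) leaves u) <= \prod_(u <- ts) nth_prime (matula u).
Proof.
elim: ts => [|u us IHus]; first by rewrite !big_nil.
by case/List.Forall_cons_iff=> le_u /IHus le_us; rewrite !big_cons expnD leq_mul.
Qed.

Lemma expn_leaves_le_nth_prime t : 2 ^ leaves t <= nth_prime (matula t).
Proof.
elim/tree_ind_Forall: t => -[|u us] // IHts.
apply: leq_trans (ltnW (nth_prime_gt _)).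
by rewrite matula_Node leaves_Node // expn_sum_leaves_le_prod.
Qed.

Lemma expn_leaves_le_matula t : 1 < leaves t -> 2 ^ leaves t <= matula t.
Proof.
case: t => -[|u us] // _.
rewrite matula_Node leaves_Node // expn_sum_leaves_le_prod //.
by apply/List.Forall_forall => v _; apply: expn_leaves_le_nth_prime.
Qed.

Lemma matula_star n : matula (star n) = 2 ^ n.
Proof. by rewrite matula_Node big_nseq; elim: n => //= n ->; rewrite expnS. Qed.

Lemma leaves_star n : 0 < n -> leaves (star n) = n.
Proof.
case: n => // n _; rewrite leaves_Node // big_nseq.
by elim: n => //= n ->.
Qed.

Lemma topological_star n : 1 < n -> topological (star n).
Proof. by case: n => [|[|n]] //= _; elim: n. Qed.

Theorem mainTheorem1 :
  (* n >= 2: the star K_{1,n} is a topological tree with n leaves, and has the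
     smallest Matula number among all topological trees with n leaves *)
  (forall n : nat, 1 < n ->
     [/\ topological (star n), leaves (star n) = n &
         forall T : tree, topological T -> leaves T = n ->
           matula (star n) <= matula T])
  (* n = 1: the degenerate "star" with one leaf is the one-vertex tree K_1 *)
  /\ (topological K1 /\ leaves K1 = 1 /\
      forall T : tree, topological T -> leaves T = 1 -> matula K1 <= matula T)
  (* M(K_{1,n}) = 2^n for n > 1 *)
  /\ (forall n : nat, 1 < n -> matula (star n) = 2 ^ n).
Proof.
split; last split.
- move=> n n_gt1; split; first exact: topological_star.
    exact/leaves_star/ltnW.
  move=> T _ leaves_T; rewrite matula_star -leaves_T.
  by apply: expn_leaves_le_matula; rewrite leaves_T.
- by do 2!split=> //; move=> T _ _; apply: matula_gt0.
- by move=> n _; apply: matula_star.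
Qed.
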